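(* Let $\eta\in\mathcal O_N$ and let $p^B_i(\eta)$, $p^D_i(\eta)$ denote the probabilities that an explorer attaches to column $i$ in configuration $\eta$ under ballistic, respectively diffusive, deposition. Then for every $k=1,\dots,N$, $$\sum_{i=1}^k p^B_i(\eta)\ge\sum_{i=1}^k\frac{\eta_i+1}{|\eta|+N}\quad\text{and}\quad\sum_{i=1}^k p^D_i(\eta)\ge\sum_{i=1}^k\frac{\eta_i+1}{|\eta|+N}.$$
   Context: Deposition models: for $N\ge2$, $G_N=\{1,\dots,N\}$, a configuration $\eta\in\mathbb N^N$ gives column heights, $|\eta|=\sum_i\eta_i$. Given $\eta$, an explorer is a walk $(X_n,Z_n)_{n\ge0}$ with $(X_n)$ i.i.d. uniform on $G_N$, $Z_0=\max_i\eta_i+1$, and increments $Z_{n+1}-Z_n$ i.i.d. uniform on $\{-1,1\}$ independent of $(X_n)$ (diffusive deposition) or identically $-1$ (ballistic deposition); with $n^*=\inf\{n:Z_n\le\eta_{X_n}\}$, the explorer attaches to column $X_{n^*}$. $\mathcal O_N$ is the set of $\eta\in\mathbb N^N$ with $\eta_1\ge\dots\ge\eta_N$. *)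

From Stdlib Require Import Reals Lra Lia ZArith Arith List.
Import ListNotations.
Open Scope R_scope.

(* Columns are indexed 1..N; a configuration is eta : nat -> nat,
   only its values on 1..N matter. *)

Definition total (N : nat) (eta : nat -> nat) : nat :=
  fold_right Nat.add 0%nat (map eta (seq 1 N)).

Definition maxh (N : nat) (eta : nat -> nat) : nat :=
  fold_right Nat.max 0%nat (map eta (seq 1 N)).

Fixpoint words {A : Type} (letters : list A) (len : nat) : list (list A) :=
  match len with
  | O => [[]]
  | S l => flat_map (fun a => map (cons a) (words letters l)) letters
  end.

Fixpoint walk (z0 : Z) (ds : list Z) : list Z :=
  match ds with
  | [] => [z0]
  | d :: ds' => z0 :: walk (z0 + d)%Z ds'
  end.

(* column to which the explorer attaches, if the first time n with
   Z_n <= eta (X_n) occurs within the given (finite) trajectory *)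
Fixpoint attach (eta : nat -> nat) (xs : list nat) (zs : list Z) : option nat :=
  match xs, zs with
  | x :: xs', z :: zs' =>
      if Z.leb z (Z.of_nat (eta x)) then Some x else attach eta xs' zs'
  | _, _ => None
  end.

(* Increment laws: uniform on the given list. *)
Definition diffusive_steps : list Z := [1%Z; (-1)%Z].
Definition ballistic_steps : list Z := [(-1)%Z].

(* P(n* <= n and X_{n*} = i): exact probability of an event determined by
   X_0..X_n (i.i.d. uniform on {1..N}) and the first n increments
   (i.i.d. uniform on the list steps). *)
Definition attach_prob_upto (steps : list Z) (N : nat) (eta : nat -> nat)
    (i n : nat) : R :=
  let z0 := Z.of_nat (S (maxh N eta)) in
  let good := filter
      (fun p : list nat * list Z =>
         match attach eta (fst p) (walk z0 (snd p)) with
         | Some j => Nat.eqb j i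
         | None => false
         end)
      (list_prod (words (seq 1 N) (S n)) (words steps n)) in
  INR (length good) / (INR N ^ (S n) * INR (length steps) ^ n).

Definition rsum_1_to (k : nat) (f : nat -> R) : R :=
  fold_right Rplus 0 (map f (seq 1 k)).

From Stdlib Require Import Reals Lra Lia ZArith Arith List.
Import ListNotations.
Open Scope R_scope.

(* The probabilities of attaching within n moves are iterates of a monotone one-step
   operator, so a function h <= 1 that lies below its own image bounds from below the
   probability of attaching to one of the columns 1..k plus the probability of not having
   attached yet.  When every step is at least -1, such a function is the probability that a
   ballistic explorer started at a given height attaches to 1..k: it is nondecreasing in the
   height and can be computed level by level.  Because the columns reaching any height form
   an initial segment 1..m, a weighted-average comparison shows that from above the tallest
   column it is at least sum_{i<=k} (eta_i + 1) / (|eta| + N).  Finally, the probability of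
   never attaching vanishes: trivially for ballistic moves, and for diffusive moves because
   its limit is a bounded function that is harmonic above the tallest column (hence
   constant there) and at most (N - 1) / N times its supremum below it. *)

Definition rsum {A} (l : list A) (f : A -> R) : R := fold_right Rplus 0 (map f l).
Definition mean {A} (l : list A) (f : A -> R) : R := / INR (length l) * rsum l f.
Definition indicator (b : bool) : R := if b then 1 else 0.

Lemma indicator_bounds b : 0 <= indicator b <= 1.
Proof. unfold indicator; destruct b; lra. Qed.

Lemma rsum_cons {A : Type} a l (f : A -> R) : rsum (a :: l) f = f a + rsum l f.
Proof. reflexivity. Qed.

Lemma rsum_app {A : Type} l1 l2 (f : A -> R) : rsum (l1 ++ l2) f = rsum l1 f + rsum l2 f.
Proof.
  induction l1 as [|a l1 IH]; [change (rsum [] f) with 0; rewrite app_nil_l; lra|].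
  rewrite <- app_comm_cons, !rsum_cons, IH; lra.
Qed.

Lemma rsum_ext_in {A : Type} l (f g : A -> R) :
  (forall a, In a l -> f a = g a) -> rsum l f = rsum l g.
Proof. intros H; unfold rsum; f_equal; apply map_ext_in, H. Qed.

Lemma rsum_ext {A : Type} l (f g : A -> R) : (forall a, f a = g a) -> rsum l f = rsum l g.
Proof. intros H; apply rsum_ext_in; auto. Qed.

Lemma rsum_plus {A : Type} l (f g : A -> R) : rsum l (fun a => f a + g a) = rsum l f + rsum l g.
Proof. induction l as [|a l IH]; [cbn; lra|]. rewrite !rsum_cons, IH; lra. Qed.

Lemma rsum_scal {A : Type} l c (f : A -> R) : rsum l (fun a => c * f a) = c * rsum l f.
Proof. induction l as [|a l IH]; [cbn; lra|]. rewrite !rsum_cons, IH; lra. Qed.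

Lemma rsum_const {A : Type} l c : rsum l (fun _ : A => c) = INR (length l) * c.
Proof. induction l as [|a l IH]; [cbn; lra|]. rewrite rsum_cons, IH, length_cons, S_INR; lra. Qed.

Lemma rsum_le_in {A : Type} l (f g : A -> R) :
  (forall a, In a l -> f a <= g a) -> rsum l f <= rsum l g.
Proof.
  induction l as [|a l IH]; intros H; [cbn; lra|]. rewrite !rsum_cons.
  apply Rplus_le_compat; [apply H; left | apply IH; intros; apply H; right]; auto.
Qed.

Lemma rsum_nonneg {A : Type} l (f : A -> R) : (forall a, 0 <= f a) -> 0 <= rsum l f.
Proof.
  intros H. rewrite <- (Rmult_0_r (INR (length l))), <- rsum_const.
  apply rsum_le_in; auto.
Qed.

Lemma rsum_swap {A B : Type} (l1 : list A) (l2 : list B) F :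
  rsum l1 (fun a => rsum l2 (fun b => F a b)) = rsum l2 (fun b => rsum l1 (fun a => F a b)).
Proof.
  induction l1 as [|a l1 IH].
  - rewrite (rsum_ext l2 _ (fun _ => 0)), rsum_const by reflexivity. cbn; lra.
  - rewrite rsum_cons, IH, <- rsum_plus. reflexivity.
Qed.

Lemma rsum_list_prod {A B : Type} (l1 : list A) (l2 : list B) F :
  rsum (list_prod l1 l2) F = rsum l1 (fun a => rsum l2 (fun b => F (a, b))).
Proof.
  induction l1 as [|a l1 IH]; [reflexivity|]. cbn [list_prod].
  rewrite rsum_app, rsum_cons, IH. unfold rsum; rewrite map_map. reflexivity.
Qed.

Lemma rsum_flat_map_cons {A : Type} (l : list A) (W : list (list A)) F :
  rsum (flat_map (fun a => map (cons a) W) l) F = rsum l (fun a => rsum W (fun w => F (a :: w))).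
Proof.
  induction l as [|a l IH]; [reflexivity|]. cbn [flat_map].
  rewrite rsum_app, rsum_cons, IH. unfold rsum; rewrite map_map. reflexivity.
Qed.

Lemma rsum_filter {A : Type} (p : A -> bool) l :
  INR (length (filter p l)) = rsum l (fun a => indicator (p a)).
Proof.
  induction l as [|a l IH]; [reflexivity|]. cbn [filter]. rewrite rsum_cons, <- IH.
  unfold indicator; destruct (p a); [rewrite length_cons, S_INR|]; lra.
Qed.

Lemma length_pos_INR {A : Type} (l : list A) : l <> [] -> 0 < INR (length l).
Proof. intros H; apply lt_0_INR; destruct l; [congruence | cbn; lia]. Qed.

Lemma mean_ext {A : Type} l (f g : A -> R) : (forall a, f a = g a) -> mean l f = mean l g.
Proof. intros H; unfold mean; rewrite (rsum_ext l f g H); reflexivity. Qed.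

Lemma mean_le {A : Type} l (f g : A -> R) : (forall a, f a <= g a) -> mean l f <= mean l g.
Proof.
  intros H; unfold mean. destruct l as [|a l]; [cbn; lra|].
  apply Rmult_le_compat_l; [left; apply Rinv_0_lt_compat, length_pos_INR; discriminate|].
  apply rsum_le_in; auto.
Qed.

Lemma mean_const {A : Type} l c : l <> [] -> mean l (fun _ : A => c) = c.
Proof. intros H; unfold mean; rewrite rsum_const. field. apply Rgt_not_eq, length_pos_INR, H. Qed.

Lemma mean_ge_in {A : Type} l (f : A -> R) c :
  l <> [] -> (forall a, In a l -> c <= f a) -> c <= mean l f.
Proof.
  intros Hl H. rewrite <- (mean_const l c Hl). unfold mean.
  apply Rmult_le_compat_l; [left; apply Rinv_0_lt_compat, length_pos_INR, Hl|].
  apply rsum_le_in; auto.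
Qed.

Lemma mean_bounds {A : Type} l (f : A -> R) lo hi : l <> [] ->
  (forall a, lo <= f a <= hi) -> lo <= mean l f <= hi.
Proof.
  intros Hl H. split; [apply mean_ge_in; auto; intros; apply H|].
  rewrite <- (mean_const l hi Hl). apply mean_le; intros; apply H.
Qed.

Lemma mean_plus {A : Type} l (f g : A -> R) : mean l (fun a => f a + g a) = mean l f + mean l g.
Proof. unfold mean; rewrite rsum_plus; ring. Qed.

Lemma mean_rsum {A I : Type} l (is : list I) (F : I -> A -> R) :
  mean l (fun a => rsum is (fun i => F i a)) = rsum is (fun i => mean l (F i)).
Proof. unfold mean; rewrite rsum_swap, rsum_scal. reflexivity. Qed.

Lemma mean_swap {A B : Type} (l1 : list A) (l2 : list B) F :
  mean l1 (fun a => mean l2 (fun b => F a b)) = mean l2 (fun b => mean l1 (fun a => F a b)).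
Proof.
  unfold mean. rewrite !rsum_scal, rsum_swap.
  rewrite <- !Rmult_assoc, (Rmult_comm (/ _) (/ _)). reflexivity.
Qed.

Lemma words_length {A : Type} (L : list A) n : length (words L n) = (length L ^ n)%nat.
Proof.
  induction n as [|n IH]; [reflexivity|]. cbn [words]. rewrite length_flat_map.
  rewrite (map_ext _ (fun _ => length L ^ n)%nat) by (intros; rewrite length_map; auto).
  clear IH. rewrite Nat.pow_succ_r'. generalize (length L ^ n)%nat; intros c.
  induction L as [|a L IHL]; [reflexivity|]. unfold list_sum in *; cbn in *; lia.
Qed.

Lemma mean_words {A : Type} (L : list A) n F :
  mean (words L (S n)) F = mean L (fun a => mean (words L n) (fun w => F (a :: w))).
Proof.
  unfold mean. cbn [words]. rewrite rsum_flat_map_cons, rsum_scal.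
  change (flat_map _ L) with (words L (S n)).
  rewrite words_length, Nat.pow_succ_r', mult_INR, Rinv_mult, Rmult_assoc, <- words_length.
  reflexivity.
Qed.

Lemma mean_list_prod {A B : Type} (l1 : list A) (l2 : list B) F :
  mean (list_prod l1 l2) F = mean l1 (fun a => mean l2 (fun b => F (a, b))).
Proof.
  unfold mean. rewrite rsum_list_prod, rsum_scal, length_prod, mult_INR, Rinv_mult.
  apply Rmult_assoc.
Qed.

Lemma cv_const c : Un_cv (fun _ => c) c.
Proof. intros e He; exists 0%nat; intros; unfold R_dist; rewrite Rminus_diag, Rabs_R0; auto. Qed.

Lemma cv_rsum {A : Type} (l : list A) (u : A -> nat -> R) p :
  (forall a, Un_cv (u a) (p a)) -> Un_cv (fun n => rsum l (fun a => u a n)) (rsum l p).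
Proof.
  intros H. induction l as [|a l IH]; [exact (cv_const 0)|].
  rewrite rsum_cons. apply CV_plus; auto.
Qed.

Lemma cv_mean {A : Type} (l : list A) (u : A -> nat -> R) p :
  (forall a, Un_cv (u a) (p a)) -> Un_cv (fun n => mean l (fun a => u a n)) (mean l p).
Proof. intros H; apply CV_mult; [apply cv_const | apply cv_rsum, H]. Qed.

Section MonotoneIteration.

Variable T : (Z -> R) -> Z -> R.
Hypothesis T_mono : forall f f', (forall z, f z <= f' z) -> forall z, T f z <= T f' z.

Lemma iter_mono n f f' :
  (forall z, f z <= f' z) -> forall z, Nat.iter n T f z <= Nat.iter n T f' z.
Proof. intros H; induction n as [|n IH]; [exact H|]. apply T_mono, IH. Qed.

Lemma iter_le_succ f :
  (forall z, f z <= T f z) -> forall n z, Nat.iter n T f z <= Nat.iter (S n) T f z.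
Proof. intros H n; rewrite Nat.iter_succ_r; apply iter_mono, H. Qed.

Lemma iter_succ_le f :
  (forall z, T f z <= f z) -> forall n z, Nat.iter (S n) T f z <= Nat.iter n T f z.
Proof. intros H n; rewrite Nat.iter_succ_r; apply iter_mono, H. Qed.

Lemma subsolution_le_iter h f :
  (forall z, h z <= T h z) -> (forall z, h z <= f z) -> forall n z, h z <= Nat.iter n T f z.
Proof.
  intros Hh Hf n; induction n as [|n IH]; [exact Hf|].
  intros z; apply (Rle_trans _ _ _ (Hh z)), T_mono, IH.
Qed.

End MonotoneIteration.

Lemma length_filter_le_impl {A : Type} (p q : A -> bool) l :
  (forall a, p a = true -> q a = true) -> (length (filter p l) <= length (filter q l))%nat.
Proof.
  intros H; induction l as [|a l IH]; cbn; [lia|].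
  destruct (p a) eqn:Ea; [rewrite (H a Ea); cbn; lia|]. destruct (q a); cbn; lia.
Qed.

Section Columns.

Variables (N : nat) (eta : nat -> nat).
Hypothesis hord : forall i j, (1 <= i)%nat -> (i <= j)%nat -> (j <= N)%nat -> (eta j <= eta i)%nat.

Definition reached (n : nat) (z : Z) : nat :=
  length (filter (fun x => (z <=? Z.of_nat (eta x))%Z) (seq 1 n)).

Lemma reached_anti n z z' : (z <= z')%Z -> (reached n z' <= reached n z)%nat.
Proof.
  intros Hz. apply length_filter_le_impl. intros x Hx.
  apply Z.leb_le in Hx; apply Z.leb_le; lia.
Qed.

Lemma reached_le n z : (reached n z <= n)%nat.
Proof. unfold reached. rewrite <- (length_seq n 1) at 2. apply filter_length_le. Qed.

Lemma reached_nonpos n z : (z <= 0)%Z -> reached n z = n.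
Proof.
  intros Hz. unfold reached. rewrite (filter_ext_in _ (fun _ => true)), filter_true, length_seq;
    [reflexivity|]. intros x _. apply Z.leb_le; lia.
Qed.

Lemma eta_le_maxh x : In x (seq 1 N) -> (eta x <= maxh N eta)%nat.
Proof.
  unfold maxh. induction (seq 1 N) as [|a l IH]; [contradiction|].
  intros [<-|Hx]; cbn; [lia|]. specialize (IH Hx); lia.
Qed.

Lemma maxh_eq_eta1 : (1 <= N)%nat -> maxh N eta = eta 1%nat.
Proof.
  intros HN.
  apply Nat.le_antisymm; [|apply eta_le_maxh, in_seq; lia].
  unfold maxh. assert (Hcols : forall x, In x (seq 1 N) -> (eta x <= eta 1)%nat).
  { intros x Hx; apply in_seq in Hx; apply hord; lia. }
  induction (seq 1 N) as [|a l IH]; cbn; [lia|].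
  apply Nat.max_lub; [apply Hcols; left | apply IH; intros; apply Hcols; right]; auto.
Qed.

Lemma reached_above_max z : (Z.of_nat (maxh N eta) < z)%Z -> reached N z = 0%nat.
Proof.
  intros Hz. unfold reached. rewrite (filter_ext_in _ (fun _ => false)), filter_false;
    [reflexivity|]. intros x Hx. pose proof (eta_le_maxh x Hx). apply Z.leb_gt; lia.
Qed.

Lemma reached_pos z : (1 <= N)%nat -> (z <= Z.of_nat (maxh N eta))%Z -> (1 <= reached N z)%nat.
Proof.
  intros HN Hz. unfold reached. replace N with (S (N - 1)) by lia.
  cbn [seq filter]. rewrite (maxh_eq_eta1 HN) in Hz.
  replace (z <=? Z.of_nat (eta 1%nat))%Z with true by (symmetry; apply Z.leb_le; lia).
  cbn; lia.
Qed.

(* Columns reaching a given height form an initial segment [1..reached N z]. *)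
Lemma reached_min k z : (k <= N)%nat -> reached k z = Nat.min k (reached N z).
Proof.
  intros Hk. unfold reached. set (p := fun x => (z <=? Z.of_nat (eta x))%Z).
  replace N with (k + (N - k))%nat by lia. rewrite seq_app, filter_app, length_app.
  destruct (existsb p (seq (1 + k) (N - k))) eqn:Erest.
  - apply existsb_exists in Erest as [y [Hy Hpy]]. apply in_seq in Hy.
    rewrite (filter_ext_in p (fun _ => true) (seq 1 k)), filter_true, length_seq; [lia|].
    intros x Hx. apply in_seq in Hx. unfold p in *. apply Z.leb_le in Hpy; apply Z.leb_le.
    pose proof (hord x y ltac:(lia) ltac:(lia) ltac:(lia)). lia.
  - rewrite (filter_ext_in p (fun _ => false) (seq (1 + k) (N - k))), filter_false.
    + pose proof (filter_length_le p (seq 1 k)). rewrite length_seq in H. cbn; lia.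
    + intros x Hx. destruct (p x) eqn:Ex; [|reflexivity].
      rewrite <- Erest; symmetry; apply existsb_exists; eauto.
Qed.

Lemma rsum_first_columns k z : (k <= N)%nat ->
  rsum (seq 1 N) (fun x => if (z <=? Z.of_nat (eta x))%Z then indicator (x <=? k) else 0)
  = INR (Nat.min k (reached N z)).
Proof.
  intros Hk. rewrite <- (reached_min k z Hk). unfold reached. rewrite rsum_filter.
  replace N with (k + (N - k))%nat by lia. rewrite seq_app, rsum_app.
  rewrite (rsum_ext_in (seq (1 + k) _) _ (fun _ => 0)), rsum_const, Rmult_0_r, Rplus_0_r.
  - apply rsum_ext_in. intros x Hx; apply in_seq in Hx.
    replace (x <=? k)%nat with true by (symmetry; apply Nat.leb_le; lia).
    unfold indicator; destruct (z <=? _)%Z; reflexivity.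
  - intros x Hx; apply in_seq in Hx.
    replace (x <=? k)%nat with false by (symmetry; apply Nat.leb_gt; lia).
    unfold indicator; destruct (z <=? _)%Z; reflexivity.
Qed.

Lemma count_levels e M : (e <= M)%nat ->
  rsum (seq 0 (S M)) (fun l => indicator (Z.of_nat l <=? Z.of_nat e)%Z) = INR e + 1.
Proof.
  intros He. replace (S M) with (S e + (M - e))%nat by lia. rewrite seq_app, rsum_app.
  rewrite (rsum_ext_in (seq 0 (S e)) _ (fun _ => 1)), (rsum_ext_in (seq _ (M - e)) _ (fun _ => 0)).
  - rewrite !rsum_const, length_seq, S_INR; lra.
  - intros l Hl; apply in_seq in Hl. unfold indicator.
    replace (Z.of_nat l <=? Z.of_nat e)%Z with false by (symmetry; apply Z.leb_gt; lia).
    reflexivity.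
  - intros l Hl; apply in_seq in Hl. unfold indicator.
    replace (Z.of_nat l <=? Z.of_nat e)%Z with true by (symmetry; apply Z.leb_le; lia).
    reflexivity.
Qed.

Lemma reached_level_sum n : (n <= N)%nat ->
  rsum (seq 0 (S (maxh N eta))) (fun l => INR (reached n (Z.of_nat l)))
  = rsum (seq 1 n) (fun x => INR (eta x) + 1).
Proof.
  intros Hn. unfold reached. rewrite (rsum_ext _ _ (fun l => rsum (seq 1 n)
    (fun x => indicator (Z.of_nat l <=? Z.of_nat (eta x))%Z))) by (intros; apply rsum_filter).
  rewrite rsum_swap. apply rsum_ext_in. intros x Hx. apply count_levels, eta_le_maxh.
  apply in_seq in Hx; apply in_seq; lia.
Qed.

Lemma total_plus_N : rsum (seq 1 N) (fun x => INR (eta x) + 1) = INR (total N eta) + INR N.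
Proof.
  rewrite rsum_plus, rsum_const, length_seq, Rmult_1_r. f_equal. unfold total.
  induction (seq 1 N) as [|a l IH]; [reflexivity|].
  cbn [map fold_right]. rewrite plus_INR, <- IH, rsum_cons. reflexivity.
Qed.

End Columns.

Lemma rsum_indicator_eqb x k : (1 <= x)%nat ->
  rsum (seq 1 k) (fun i => indicator (x =? i)) = indicator (x <=? k).
Proof.
  intros Hx. induction k as [|k IH].
  - unfold indicator; cbn.
    replace (x <=? 0)%nat with false by (symmetry; apply Nat.leb_gt; lia). lra.
  - rewrite seq_S, rsum_app, IH, rsum_cons. unfold indicator; cbn [rsum fold_right map].
    destruct (Nat.leb_spec x k), (Nat.eqb_spec x (1 + k)), (Nat.leb_spec x (S k)); lia || lra.
Qed.

Section Explorer.

Variables (N : nat) (eta : nat -> nat) (D : list Z).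

Lemma columns_nonempty : (1 <= N)%nat -> seq 1 N <> [].
Proof. intros HN; destruct N; [lia | discriminate]. Qed.

(* One move of an explorer at height [z]: attaching to the drawn column [x] pays [g x],
   otherwise the value [h] is collected at the next height.  Iterating it from [0], resp. [1],
   gives the probability of attaching to column [i], resp. of not having attached, within
   [n] moves. *)
Definition explore (g : nat -> R) (h : Z -> R) (z : Z) : R :=
  mean (seq 1 N) (fun x =>
    if (z <=? Z.of_nat (eta x))%Z then g x else mean D (fun d => h (z + d)%Z)).

Definition attached (i n : nat) : Z -> R :=
  Nat.iter n (explore (fun x => indicator (x =? i))) (fun _ => 0).

Definition unattached (n : nat) : Z -> R :=
  Nat.iter n (explore (fun _ => 0)) (fun _ => 1).

Lemma explore_mono g h h' :
  (forall z, h z <= h' z) -> forall z, explore g h z <= explore g h' z.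
Proof.
  intros H z. apply mean_le. intros x. destruct (z <=? _)%Z; [lra|]. apply mean_le; auto.
Qed.

Lemma explore_ext g g' h h' :
  (forall x, (1 <= x)%nat -> g x = g' x) -> (forall z, h z = h' z) ->
  forall z, explore g h z = explore g' h' z.
Proof.
  intros Hg Hh z. unfold explore, mean. f_equal. apply rsum_ext_in. intros x Hx.
  apply in_seq in Hx. rewrite Hg, (rsum_ext D _ _ (fun d => Hh _)) by lia. reflexivity.
Qed.

Lemma explore_sum {I : Type} (is : list I) g g0 h h0 z :
  explore (fun x => rsum is (fun i => g i x) + g0 x) (fun z => rsum is (fun i => h i z) + h0 z) z
  = rsum is (fun i => explore (g i) (h i) z) + explore g0 h0 z.
Proof.
  unfold explore. rewrite <- mean_rsum, <- mean_plus. apply mean_ext. intros x.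
  destruct (z <=? _)%Z; [reflexivity|]. rewrite mean_plus, mean_rsum. reflexivity.
Qed.

Lemma explore_bounds g h : (1 <= N)%nat -> D <> [] ->
  (forall x, 0 <= g x <= 1) -> (forall z, 0 <= h z <= 1) -> forall z, 0 <= explore g h z <= 1.
Proof.
  intros HN HD Hg Hh z. apply mean_bounds; [apply columns_nonempty, HN|]. intros x.
  destruct (z <=? _)%Z; [apply Hg | apply mean_bounds; auto].
Qed.

Lemma explore_cv g (u : nat -> Z -> R) l :
  (forall z, Un_cv (fun n => u n z) (l z)) ->
  forall z, Un_cv (fun n => explore g (u n) z) (explore g l z).
Proof.
  intros H z. apply cv_mean. intros x. destruct (z <=? _)%Z; [apply cv_const|].
  apply cv_mean; auto.
Qed.

Lemma explore_split g h z :
  explore g h z = / INR N * (rsum (seq 1 N) (fun x => if (z <=? Z.of_nat (eta x))%Z then g x else 0)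
                             + (INR N - INR (reached eta N z)) * mean D (fun d => h (z + d)%Z)).
Proof.
  set (t := fun x => (z <=? Z.of_nat (eta x))%Z). set (m := mean D (fun d => h (z + d)%Z)).
  assert (Hmiss : rsum (seq 1 N) (fun x => 1 - indicator (t x)) = INR N - INR (reached eta N z)).
  { unfold reached; fold t; rewrite rsum_filter.
    assert (rsum (seq 1 N) (fun _ => 1) = INR N) by (rewrite rsum_const, length_seq; lra).
    assert (rsum (seq 1 N) (fun x => 1 - indicator (t x))
            + rsum (seq 1 N) (fun x => indicator (t x)) = rsum (seq 1 N) (fun _ => 1))
      by (rewrite <- rsum_plus; apply rsum_ext; intros; lra).
    lra. }
  unfold explore, mean at 1. rewrite length_seq. f_equal.
  rewrite (rsum_ext _ _ (fun x => (if t x then g x else 0) + m * (1 - indicator (t x)))).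
  - rewrite rsum_plus, rsum_scal, Hmiss. unfold t. ring.
  - intros x; unfold indicator, t, m; destruct (z <=? _)%Z; lra.
Qed.

Lemma explore_no_payoff h z :
  explore (fun _ => 0) h z
  = (INR N - INR (reached eta N z)) / INR N * mean D (fun d => h (z + d)%Z).
Proof.
  rewrite explore_split, (rsum_ext _ _ (fun _ => 0)), rsum_const
    by (intros; destruct (_ <=? _)%Z; reflexivity).
  unfold Rdiv; ring.
Qed.

Lemma attached_sum k n z :
  rsum (seq 1 k) (fun i => attached i n z) + unattached n z
  = Nat.iter n (explore (fun x => indicator (x <=? k))) (fun _ => 1) z.
Proof.
  revert z; induction n as [|n IH]; intros z.
  - cbn. rewrite rsum_const; lra.
  - unfold attached, unattached. cbn [Nat.iter nat_rect]. rewrite <- explore_sum.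
    apply explore_ext; [|exact IH]. intros x Hx. rewrite Rplus_0_r. apply rsum_indicator_eqb, Hx.
Qed.

Lemma iter_explore_bounds g f : (1 <= N)%nat -> D <> [] ->
  (forall x, 0 <= g x <= 1) -> (forall z, 0 <= f z <= 1) ->
  forall n z, 0 <= Nat.iter n (explore g) f z <= 1.
Proof. intros HN HD Hg Hf n; induction n as [|n IH]; [exact Hf|]. apply explore_bounds; auto. Qed.

Lemma attached_converges i z : (1 <= N)%nat -> D <> [] ->
  {l | Un_cv (fun n => attached i (S n) z) l}.
Proof.
  intros HN HD. apply growing_cv.
  - intros n. apply iter_le_succ; [apply explore_mono|]. intros z'.
    apply explore_bounds; auto using indicator_bounds. intros; lra.
  - exists 1. intros y [n ->]. apply iter_explore_bounds; auto using indicator_bounds. intros; lra.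
Qed.

Lemma unattached_converges z : (1 <= N)%nat -> D <> [] -> {l | Un_cv (fun n => unattached n z) l}.
Proof.
  intros HN HD. apply decreasing_cv.
  - intros n. apply iter_succ_le; [apply explore_mono|]. intros z'.
    apply explore_bounds; auto; intros; lra.
  - exists 0. intros y [n ->]. unfold opp_seq.
    enough (0 <= unattached n z) by lra. apply iter_explore_bounds; auto; intros; lra.
Qed.

Definition attaches_to (z : Z) (i : nat) (xs : list nat) (ds : list Z) : bool :=
  match attach eta xs (walk z ds) with Some j => (j =? i)%nat | None => false end.

Lemma attaches_to_cons z i x xs d ds :
  attaches_to z i (x :: xs) (d :: ds) =
  if (z <=? Z.of_nat (eta x))%Z then (x =? i)%nat else attaches_to (z + d)%Z i xs ds.
Proof. unfold attaches_to; cbn. destruct (z <=? _)%Z; reflexivity. Qed.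

Lemma words_nonempty {A : Type} (L : list A) n : L <> [] -> words L n <> [].
Proof.
  intros HL Hw. apply (f_equal (@length _)) in Hw. rewrite words_length in Hw.
  destruct L; [congruence|]. cbn in Hw. apply Nat.pow_nonzero in Hw; lia.
Qed.

Lemma mean_attaches_to n i z : (1 <= N)%nat -> D <> [] ->
  mean (words (seq 1 N) (S n))
    (fun xs => mean (words D n) (fun ds => indicator (attaches_to z i xs ds)))
  = attached i (S n) z.
Proof.
  intros HN HD. revert z; induction n as [|n IH]; intros z;
    rewrite mean_words; apply mean_ext; intros x.
  - cbn [words]. unfold mean; cbn. unfold attaches_to; cbn.
    destruct (z <=? _)%Z; [|rewrite rsum_const]; cbn; lra.
  - transitivity (mean (words (seq 1 N) (S n)) (fun xs => mean D (fun d => mean (words D n)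
      (fun ds => indicator (if (z <=? Z.of_nat (eta x))%Z then (x =? i)%nat
                            else attaches_to (z + d)%Z i xs ds))))).
    { apply mean_ext; intros xs. rewrite mean_words.
      apply mean_ext; intros d. apply mean_ext; intros ds. rewrite attaches_to_cons; reflexivity. }
    destruct (z <=? _)%Z.
    + rewrite !mean_const; auto using words_nonempty, columns_nonempty.
    + rewrite mean_swap. apply mean_ext; intros d. apply IH.
Qed.

Lemma attach_prob_upto_eq i n : (1 <= N)%nat -> D <> [] ->
  attach_prob_upto D N eta i n = attached i (S n) (Z.of_nat (S (maxh N eta))).
Proof.
  intros HN HD. rewrite <- mean_attaches_to by assumption.
  unfold attach_prob_upto. rewrite rsum_filter.
  transitivity (mean (list_prod (words (seq 1 N) (S n)) (words D n))
    (fun p => indicator (attaches_to (Z.of_nat (S (maxh N eta))) i (fst p) (snd p)))).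
  - unfold mean. rewrite length_prod, !words_length, mult_INR, !pow_INR, length_seq.
    apply Rmult_comm.
  - rewrite mean_list_prod. reflexivity.
Qed.

End Explorer.

Lemma min_mul_cross k m m' : (m' <= m)%nat -> (Nat.min k m * m' <= Nat.min k m' * m)%nat.
Proof.
  intros H. destruct (Nat.le_ge_cases k m'); [rewrite !Nat.min_l by lia; nia|].
  rewrite (Nat.min_r k m') by lia. destruct (Nat.le_ge_cases k m).
  - rewrite Nat.min_l by lia. nia.
  - rewrite Nat.min_r by lia. nia.
Qed.

Section Levels.

Variables (N k : nat) (r : nat -> nat).
Hypothesis HN : (1 <= N)%nat.
Hypothesis r_0 : r 0%nat = N.
Hypothesis r_anti : forall l l', (l <= l')%nat -> (r l' <= r l)%nat.

(* The probability that a ballistic explorer started at height [l] attaches to one of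
   the columns [1..k], when exactly the columns [1..r l] reach height [l]. *)
Fixpoint level_value (l : nat) : R :=
  match l with
  | O => / INR N * INR (Nat.min k (r 0%nat))
  | S l' => / INR N * (INR (Nat.min k (r l)) + (INR N - INR (r l)) * level_value l')
  end.

Lemma r_le_N l : (r l <= N)%nat.
Proof. rewrite <- r_0; apply r_anti, Nat.le_0_l. Qed.

Lemma level_cross l l' : (l <= l')%nat ->
  INR (Nat.min k (r l)) * INR (r l') <= INR (Nat.min k (r l')) * INR (r l).
Proof. intros H; rewrite <- !mult_INR; apply le_INR, min_mul_cross, r_anti, H. Qed.

Lemma INR_min_le_r l : INR (Nat.min k (r l)) <= INR (r l).
Proof. apply le_INR, Nat.le_min_r. Qed.

Lemma INR_r_le_N l : INR (r l) <= INR N.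
Proof. apply le_INR, r_le_N. Qed.

Lemma level_value_ratio l w : (l <= w)%nat -> level_value l * INR (r w) <= INR (Nat.min k (r w)).
Proof.
  assert (HN' : 0 < INR N) by (apply lt_0_INR; lia).
  revert w; induction l as [|l IH]; intros w Hw.
  - pose proof (level_cross 0 w ltac:(lia)). pose proof (INR_r_le_N w).
    pose proof (pos_INR (Nat.min k (r w))). cbn [level_value]. rewrite r_0 in *.
    apply (Rmult_le_reg_l (INR N)); [exact HN'|]. field_simplify; [|lra]. nra.
  - specialize (IH w ltac:(lia)). pose proof (level_cross (S l) w Hw).
    pose proof (INR_r_le_N (S l)). pose proof (pos_INR (Nat.min k (r w))).
    cbn [level_value]. apply (Rmult_le_reg_l (INR N)); [exact HN'|].
    field_simplify; [|lra]. nra.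
Qed.

Lemma level_value_le_succ l : level_value l <= level_value (S l).
Proof.
  assert (HN' : 0 < INR N) by (apply lt_0_INR; lia).
  pose proof (level_value_ratio l (S l) ltac:(lia)).
  change (level_value (S l)) with
    (/ INR N * (INR (Nat.min k (r (S l))) + (INR N - INR (r (S l))) * level_value l)).
  apply (Rmult_le_reg_l (INR N)); [exact HN'|]. field_simplify; lra.
Qed.

Lemma level_value_mono l l' : (l <= l')%nat -> level_value l <= level_value l'.
Proof.
  induction 1 as [|l' _ IH]; [lra|]. apply (Rle_trans _ _ _ IH), level_value_le_succ.
Qed.

Lemma level_value_le_1 l : level_value l <= 1.
Proof.
  assert (HN' : 0 < INR N) by (apply lt_0_INR; lia).
  induction l as [|l IH]; cbn [level_value]; apply (Rmult_le_reg_l (INR N)); try exact HN'.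
  - pose proof (INR_min_le_r 0). pose proof (INR_r_le_N 0). field_simplify; lra.
  - pose proof (INR_min_le_r (S l)). pose proof (INR_r_le_N (S l)). field_simplify; [nra | lra].
Qed.

Lemma level_value_sums L :
  rsum (seq 0 (S L)) (fun l => INR (Nat.min k (r l)))
  <= level_value L * rsum (seq 0 (S L)) (fun l => INR (r l)).
Proof.
  assert (HN' : 0 < INR N) by (apply lt_0_INR; lia).
  induction L as [|L IH].
  - cbn [seq level_value]. rewrite !rsum_cons, r_0. change (rsum [] _) with 0.
    right; field; lra.
  - rewrite !(seq_S (S L)), !rsum_app, !rsum_cons. change (rsum [] _) with 0. cbn [Nat.add].
    set (G := rsum (seq 0 (S L)) (fun l => INR (Nat.min k (r l)))) in *.
    set (S0 := rsum (seq 0 (S L)) (fun l => INR (r l))) in *.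
    assert (Hcross : G * INR (r (S L)) <= INR (Nat.min k (r (S L))) * S0).
    { unfold G, S0. rewrite Rmult_comm, <- !rsum_scal. apply rsum_le_in. intros l Hl.
      apply in_seq in Hl. pose proof (level_cross l (S L) ltac:(lia)). lra. }
    assert (HS0 : INR N <= S0).
    { unfold S0. cbn [seq]. rewrite rsum_cons, r_0.
      pose proof (rsum_nonneg (seq 1 L) (fun l => INR (r l)) (fun l => pos_INR _)). lra. }
    pose proof (INR_min_le_r (S L)). pose proof (INR_r_le_N (S L)).
    pose proof (pos_INR (Nat.min k (r (S L)))).
    change (level_value (S L)) with
      (/ INR N * (INR (Nat.min k (r (S L))) + (INR N - INR (r (S L))) * level_value L)).
    set (g := INR (Nat.min k (r (S L)))) in *. set (m := INR (r (S L))) in *.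
    set (B := level_value L) in *.
    (* Both sides are weighted averages of [G / S0] and [g / m]; the larger ratio [g / m]
       has weight [m / (S0 + m)] on the left and the bigger weight [m / N] on the right. *)
    assert (Key : S0 * ((g + (INR N - m) * B) * (S0 + m) - INR N * (G + g))
                  = (S0 + m - INR N) * (g * S0 - m * G) + (INR N - m) * (S0 + m) * (B * S0 - G))
      by ring.
    assert (0 <= (S0 + m - INR N) * (g * S0 - m * G)) by (apply Rmult_le_pos; lra).
    assert (0 <= (INR N - m) * (S0 + m) * (B * S0 - G))
      by (apply Rmult_le_pos; [apply Rmult_le_pos|]; lra).
    assert (0 <= (g + (INR N - m) * B) * (S0 + m) - INR N * (G + g)).
    { apply (Rmult_le_reg_l S0); lra. }
    apply (Rmult_le_reg_l (INR N)); [exact HN'|]. field_simplify; lra.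
Qed.

End Levels.

Section LowerBound.

Variables (N : nat) (eta : nat -> nat) (k : nat).
Hypothesis HN : (1 <= N)%nat.
Hypothesis hord : forall i j, (1 <= i)%nat -> (i <= j)%nat -> (j <= N)%nat -> (eta j <= eta i)%nat.
Hypothesis Hk : (k <= N)%nat.

Let reached_level (l : nat) : nat := reached eta N (Z.of_nat l).

Lemma reached_level_0 : reached_level 0%nat = N.
Proof. apply reached_nonpos, Z.le_refl. Qed.

Lemma reached_level_anti l l' : (l <= l')%nat -> (reached_level l' <= reached_level l)%nat.
Proof. intros H; apply reached_anti, Nat2Z.inj_le, H. Qed.

Definition ballistic_bound (z : Z) : R :=
  level_value N k reached_level (Z.to_nat (Z.min z (Z.of_nat (maxh N eta)))).

Lemma ballistic_bound_mono z z' : (z <= z')%Z -> ballistic_bound z <= ballistic_bound z'.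
Proof.
  intros H; apply (level_value_mono N k reached_level HN reached_level_0 reached_level_anti).
  clear - H; lia.
Qed.

Lemma ballistic_bound_le_1 z : ballistic_bound z <= 1.
Proof. apply (level_value_le_1 N k reached_level HN reached_level_0 reached_level_anti). Qed.

Lemma ballistic_bound_subsolution D : D <> [] -> (forall d, In d D -> (-1 <= d)%Z) ->
  forall z, ballistic_bound z <= explore N eta D (fun x => indicator (x <=? k)) ballistic_bound z.
Proof.
  intros HD Hsteps z. rewrite explore_split, (rsum_first_columns N eta hord k z Hk).
  assert (HN' : 0 < INR N) by (apply lt_0_INR; lia).
  pose proof (le_INR _ _ (reached_le eta N z)) as Hreach.
  assert (Hmean : ballistic_bound (z - 1) <= mean D (fun d => ballistic_bound (z + d)%Z)).
  { apply mean_ge_in; [exact HD|]. intros d Hd. apply ballistic_bound_mono.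
    specialize (Hsteps d Hd); lia. }
  set (m := mean D _) in *. unfold ballistic_bound in *.
  destruct (Z_le_gt_dec z 0) as [Hz|Hz];
    [|destruct (Z_le_gt_dec z (Z.of_nat (maxh N eta))) as [Hz'|Hz']].
  - rewrite reached_nonpos by lia. replace (Z.to_nat (Z.min z _)) with 0%nat by lia.
    cbn [level_value]. rewrite reached_level_0. right; ring.
  - replace (Z.to_nat (Z.min z _)) with (S (Z.to_nat (z - 1))) by lia.
    replace (Z.to_nat (Z.min (z - 1) _)) with (Z.to_nat (z - 1)) in Hmean by lia.
    cbn [level_value]. unfold reached_level in *.
    replace (Z.of_nat (S (Z.to_nat (z - 1)))) with z by lia.
    apply Rmult_le_compat_l; [left; apply Rinv_0_lt_compat, HN'|].
    apply Rplus_le_compat_l, Rmult_le_compat_l; lra.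
  - rewrite reached_above_max by lia. rewrite Nat.min_0_r.
    replace (Z.to_nat (Z.min (z - 1) _)) with (Z.to_nat (Z.min z (Z.of_nat (maxh N eta))))
      in Hmean by lia.
    replace (/ INR N * (INR 0 + (INR N - INR 0) * m)) with m by (cbn; field; lra). exact Hmean.
Qed.

Lemma ballistic_bound_top :
  rsum (seq 1 k) (fun i => (INR (eta i) + 1) / (INR (total N eta) + INR N))
  <= ballistic_bound (Z.of_nat (S (maxh N eta))).
Proof.
  unfold ballistic_bound. replace (Z.to_nat (Z.min _ _)) with (maxh N eta) by lia.
  pose proof (level_value_sums N k reached_level HN reached_level_0 reached_level_anti (maxh N eta))
    as Hsum.
  unfold reached_level in *.
  rewrite (rsum_ext _ _ (fun l => INR (reached eta k (Z.of_nat l)))) in Hsum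
    by (intros; rewrite (reached_min N eta hord k _ Hk); reflexivity).
  rewrite !reached_level_sum, (total_plus_N N eta) in Hsum by lia.
  set (T := INR (total N eta) + INR N) in *.
  assert (HT : 0 < T).
  { unfold T; pose proof (pos_INR (total N eta)); pose proof (lt_0_INR N HN); lra. }
  rewrite (rsum_ext _ _ (fun i => / T * (INR (eta i) + 1))), rsum_scal
    by (intros; unfold Rdiv; ring).
  apply (Rmult_le_reg_l T); [exact HT|]. rewrite <- Rmult_assoc, Rinv_r, Rmult_1_l by lra. lra.
Qed.

Lemma ballistic_bound_le_limit D p z : D <> [] -> (forall d, In d D -> (-1 <= d)%Z) ->
  Un_cv (fun n => unattached N eta D (S n) z) 0 ->
  (forall i, Un_cv (fun n => attached N eta D i (S n) z) (p i)) ->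
  ballistic_bound z <= rsum (seq 1 k) p.
Proof.
  intros HD Hsteps Hescape Hp. rewrite <- (Rplus_0_r (rsum (seq 1 k) p)).
  apply (@Rle_cv_lim (fun _ => ballistic_bound z)
    (fun n => rsum (seq 1 k) (fun i => attached N eta D i (S n) z) + unattached N eta D (S n) z)).
  - intros n. rewrite attached_sum. apply subsolution_le_iter.
    + apply explore_mono.
    + apply ballistic_bound_subsolution; assumption.
    + intros; apply ballistic_bound_le_1.
  - apply cv_const.
  - apply CV_plus; [apply cv_rsum|]; assumption.
Qed.

End LowerBound.

Lemma cv_shift u l : Un_cv u l -> Un_cv (fun n => u (S n)) l.
Proof.
  intros H. apply (Un_cv_ext (fun n => u (n + 1)%nat)); [intros; f_equal; lia|].
  apply CV_shift', H.
Qed.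

Lemma cv_bounds u l lo hi : Un_cv u l -> (forall n, lo <= u n <= hi) -> lo <= l <= hi.
Proof.
  intros H Hu. split.
  - apply (@Rle_cv_lim (fun _ => lo) u); [intros; apply Hu | apply cv_const | exact H].
  - apply (@Rle_cv_lim u (fun _ => hi)); [intros; apply Hu | exact H | apply cv_const].
Qed.

Lemma ballistic_unattached_eq_0 N eta n z : (z <= Z.of_nat n)%Z ->
  unattached N eta ballistic_steps (S n) z = 0.
Proof.
  revert z; induction n as [|n IH]; intros z Hz;
    change (unattached N eta ballistic_steps (S ?m) z)
      with (explore N eta ballistic_steps (fun _ => 0) (unattached N eta ballistic_steps m) z);
    rewrite explore_no_payoff.
  - rewrite reached_nonpos by lia. unfold Rdiv; ring.
  - unfold mean, ballistic_steps; cbn [rsum fold_right map length]. rewrite IH by lia. ring.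
Qed.

Lemma ballistic_unattached_cv N eta z : Un_cv (fun n => unattached N eta ballistic_steps (S n) z) 0.
Proof.
  intros e He. exists (Z.to_nat z). intros n Hn.
  rewrite ballistic_unattached_eq_0 by lia. unfold R_dist; rewrite Rminus_diag, Rabs_R0; exact He.
Qed.

Lemma bounded_harmonic_const (u : Z -> R) a :
  (forall z, 0 <= u z <= 1) -> (forall z, (a < z)%Z -> u z = (u (z + 1)%Z + u (z - 1)%Z) / 2) ->
  forall z, (a <= z)%Z -> u z = u a.
Proof.
  intros Hu Hharm. set (d := u (a + 1)%Z - u a).
  assert (Hlin : forall j : nat, u (a + Z.of_nat j)%Z = u a + INR j * d /\
                                 u (a + Z.of_nat j + 1)%Z = u a + (INR j + 1) * d).
  { induction j as [|j [IH1 IH2]].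
    - cbn; rewrite Z.add_0_r; unfold d; split; lra.
    - rewrite Nat2Z.inj_succ, S_INR, <- Z.add_1_r, Z.add_assoc. split; [lra|].
      pose proof (Hharm (a + Z.of_nat j + 1)%Z ltac:(lia)) as H.
      replace (a + Z.of_nat j + 1 - 1)%Z with (a + Z.of_nat j)%Z in H by lia. lra. }
  assert (Hd : d = 0).
  { destruct (Req_dec d 0) as [|Hd]; [assumption|exfalso].
    destruct (INR_archimed (Rabs d) 1) as [j Hj]; [apply Rabs_pos_lt, Hd|].
    destruct (Hlin j) as [Hj' _]. pose proof (Hu (a + Z.of_nat j)%Z). pose proof (Hu a).
    assert (Rabs (INR j * d) <= 1) by (apply Rabs_le; lra).
    rewrite Rabs_mult, Rabs_pos_eq in H1 by apply pos_INR. lra. }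
  intros z Hz. destruct (Hlin (Z.to_nat (z - a))) as [Hz' _].
  rewrite Z2Nat.id, Zplus_minus in Hz' by lia. rewrite Hz', Hd; ring.
Qed.

Section DiffusiveEscape.

Variables (N : nat) (eta : nat -> nat).
Hypothesis HN : (1 <= N)%nat.
Hypothesis hord : forall i j, (1 <= i)%nat -> (i <= j)%nat -> (j <= N)%nat -> (eta j <= eta i)%nat.

(* Above the tallest column the function is harmonic, hence constant; below, at least
   one column blocks, so every value is at most [(N - 1) / N] times the supremum. *)
Lemma escape_harmonic_eq_0 (u : Z -> R) :
  (forall z, 0 <= u z <= 1) ->
  (forall z, u z = (INR N - INR (reached eta N z)) / INR N * ((u (z + 1)%Z + u (z - 1)%Z) / 2)) ->
  forall z, u z = 0.
Proof.
  intros Hu Hrec. assert (HN' : 1 <= INR N) by (apply (le_INR 1); exact HN).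
  set (M := Z.of_nat (maxh N eta)).
  assert (Hconst : forall z, (M <= z)%Z -> u z = u M).
  { apply bounded_harmonic_const; [exact Hu|]. intros z Hz.
    rewrite Hrec at 1. rewrite reached_above_max by lia. change (INR 0) with 0. field. lra. }
  destruct (completeness (fun y => exists z, y = u z)) as [S [HSub HSlub]].
  { exists 1. intros y [z ->]. apply Hu. }
  { exists (u 0%Z), 0%Z. reflexivity. }
  assert (HuS : forall z, u z <= S) by (intros z; apply HSub; eauto).
  assert (Hbelow : forall z, (z <= M)%Z -> u z <= (INR N - 1) / INR N * S).
  { intros z Hz. rewrite Hrec. pose proof (le_INR _ _ (reached_pos N eta hord z HN Hz)).
    pose proof (HuS (z + 1)%Z). pose proof (HuS (z - 1)%Z).
    pose proof (Hu (z + 1)%Z). pose proof (Hu (z - 1)%Z).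
    pose proof (le_INR _ _ (reached_le eta N z)).
    unfold Rdiv. rewrite !(Rmult_comm _ (/ INR N)), !Rmult_assoc.
    apply Rmult_le_compat_l; [left; apply Rinv_0_lt_compat; lra|]. cbn in *; nra. }
  assert (HSq : S <= (INR N - 1) / INR N * S).
  { apply HSlub. intros y [z ->]. destruct (Z_le_gt_dec z M).
    - apply Hbelow; assumption.
    - rewrite Hconst by lia. apply Hbelow; lia. }
  assert (HS0 : S <= 0).
  { replace ((INR N - 1) / INR N * S) with (S - S / INR N) in HSq by (field; lra).
    assert (S = S / INR N * INR N) by (field; lra). nra. }
  intros z. pose proof (Hu z). pose proof (HuS z). lra.
Qed.

Lemma diffusive_unattached_cv z : Un_cv (fun n => unattached N eta diffusive_steps (S n) z) 0.
Proof.
  assert (HD : diffusive_steps <> []) by discriminate.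
  set (lim z := proj1_sig (unattached_converges N eta diffusive_steps z HN HD)).
  assert (Hcv : forall z, Un_cv (fun n => unattached N eta diffusive_steps n z) (lim z))
    by (intros; exact (proj2_sig _)).
  assert (Hfix : forall z, lim z = explore N eta diffusive_steps (fun _ => 0) lim z).
  { intros z'. apply (UL_sequence (fun n => unattached N eta diffusive_steps (S n) z')).
    - exact (cv_shift _ _ (Hcv z')).
    - apply (explore_cv N eta diffusive_steps (fun _ => 0) _ _ Hcv). }
  assert (Hlim0 : forall z, lim z = 0).
  { apply escape_harmonic_eq_0.
    - intros z'. apply (cv_bounds _ _ _ _ (Hcv z')). intros n.
      apply iter_explore_bounds; auto; intros; lra.
    - intros z'. rewrite Hfix at 1. rewrite explore_no_payoff.
      unfold mean, diffusive_steps; cbn [rsum fold_right map length].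
      replace (z' + -1)%Z with (z' - 1)%Z by lia. f_equal. cbn; field. }
  rewrite <- (Hlim0 z). exact (cv_shift _ _ (Hcv z)).
Qed.

End DiffusiveEscape.

Theorem lemma3p7 (N : nat) (eta : nat -> nat)
  (hN : (2 <= N)%nat)
  (hord : forall i j : nat, (1 <= i)%nat -> (i <= j)%nat -> (j <= N)%nat ->
            (eta j <= eta i)%nat) :
  exists pB pD : nat -> R,
    (forall i, (1 <= i <= N)%nat ->
       Un_cv (fun n => attach_prob_upto ballistic_steps N eta i n) (pB i)) /\
    (forall i, (1 <= i <= N)%nat ->
       Un_cv (fun n => attach_prob_upto diffusive_steps N eta i n) (pD i)) /\
    (forall k, (1 <= k <= N)%nat ->
       rsum_1_to k pB >=
         rsum_1_to k (fun i => (INR (eta i) + 1) / (INR (total N eta) + INR N)) /\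
       rsum_1_to k pD >=
         rsum_1_to k (fun i => (INR (eta i) + 1) / (INR (total N eta) + INR N))).
Proof.
  assert (HN : (1 <= N)%nat) by lia.
  assert (HB : ballistic_steps <> []) by discriminate.
  assert (HD : diffusive_steps <> []) by discriminate.
  set (z0 := Z.of_nat (S (maxh N eta))).
  set (pB i := proj1_sig (attached_converges N eta ballistic_steps i z0 HN HB)).
  set (pD i := proj1_sig (attached_converges N eta diffusive_steps i z0 HN HD)).
  assert (HpB : forall i, Un_cv (fun n => attached N eta ballistic_steps i (S n) z0) (pB i))
    by (intros; exact (proj2_sig _)).
  assert (HpD : forall i, Un_cv (fun n => attached N eta diffusive_steps i (S n) z0) (pD i))
    by (intros; exact (proj2_sig _)).
  exists pB, pD. split; [|split].
  - intros i _. refine (Un_cv_ext _ _ _ _ (HpB i)).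
    intros n; symmetry; apply attach_prob_upto_eq; assumption.
  - intros i _. refine (Un_cv_ext _ _ _ _ (HpD i)).
    intros n; symmetry; apply attach_prob_upto_eq; assumption.
  - intros k [_ Hk]. unfold rsum_1_to. change (fold_right Rplus 0 (map ?f ?l)) with (rsum l f).
    pose proof (ballistic_bound_top N eta k HN hord Hk) as Htop.
    split; apply Rle_ge, (Rle_trans _ _ _ Htop);
      [apply (ballistic_bound_le_limit N eta k HN hord Hk ballistic_steps)
      |apply (ballistic_bound_le_limit N eta k HN hord Hk diffusive_steps)]; try assumption.
    + intros d [<- | []]; lia.
    + apply ballistic_unattached_cv.
    + intros d [<- | [<- | []]]; lia.
    + apply diffusive_unattached_cv; assumption.
Qed.
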